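(* Let $\rho>3$ be an odd prime. Then $\mathrm{ord}_{4\rho}(3)=\rho-1$ if and only if one of the following holds: (1) $\rho\equiv \pm 5\pmod{12}$ and $\mathrm{ord}_\rho(3)=\rho-1$; (2) $\rho\equiv -1\pmod{12}$ and $\mathrm{ord}_\rho(3)=\frac{\rho-1}{2}$.
   Context: $\mathrm{ord}_M(a)$ denotes the multiplicative order of $a$ modulo $M$. *)

From mathcomp Require Import all_boot.
Set Implicit Arguments. Unset Strict Implicit. Unset Printing Implicit Defensive.

Definition mult_order (M a k : nat) : Prop :=
  0 < k /\ a ^ k = 1 %[mod M] /\
  (forall j, 0 < j -> a ^ j = 1 %[mod M] -> k <= j).

From mathcomp Require Import all_boot all_algebra cyclic finfield.
From mathcomp Require Import zify ring.
Set Implicit Arguments. Unset Strict Implicit. Unset Printing Implicit Defensive.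
Import GRing.Theory.
Local Open Scope ring_scope.

(* Since ord_4(3) = 2 and gcd(4, rho) = 1, ord_{4 rho}(3) = lcm(2, d) where
   d = ord_rho(3); so it equals rho - 1 iff either d = rho - 1,
   or d = (rho - 1)/2 is odd.  By Euler's criterion in F_rho,
   3^((rho-1)/2) = 1 iff 3 = (-1)(-3) is a square, i.e. iff -1 and -3 are both
   squares or both non-squares.  Now -1 is a square iff 4 | rho - 1, and -3 is
   a square iff F_rho has a primitive cube root of unity w (as (2w + 1)^2 = -3),
   i.e. iff 3 | rho - 1.  Hence 3^((rho-1)/2) = 1 iff rho = +-1 (mod 12). *)

Lemma prime_prim_root (R : idomainType) k (w : R) :
  prime k -> w ^+ k = 1 -> w != 1 -> k.-primitive_root w.
Proof.
move=> k_pr wk1 w_neq1; have [m prim_w m_dvd] := prim_order_exists (prime_gt0 k_pr) wk1.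
case/primeP: k_pr => _ /(_ m m_dvd) /orP[/eqP m1|/eqP <- //].
by move: (prim_expr_order prim_w) w_neq1; rewrite m1 expr1 => ->; rewrite eqxx.
Qed.

Lemma prim_root3P (R : idomainType) (w : R) :
  (3 : R) != 0 -> 3.-primitive_root w <-> w ^+ 2 + w + 1 = 0.
Proof.
move=> three_neq0; have cube : w ^+ 3 - 1 = (w - 1) * (w ^+ 2 + w + 1) by ring.
split=> [prim_w | w_root].
  have w_neq1 : w - 1 != 0 by rewrite subr_eq0 -[w]expr1 -(prim_order_dvd prim_w).
  by apply: (mulfI w_neq1); rewrite mulr0 -cube (prim_expr_order prim_w) subrr.
apply: prime_prim_root => //; first by apply/eqP; rewrite -subr_eq0 cube w_root mulr0.
by apply: contra_neq three_neq0 => w1; rewrite -w_root w1; ring.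
Qed.

Lemma sqr_eqN3P (R : fieldType) : (2 : R) != 0 -> (3 : R) != 0 ->
  (exists y : R, y ^+ 2 = -3) <-> exists w : R, 3.-primitive_root w.
Proof.
move=> two_neq0 three_neq0.
split=> [[y y2]|[w /(prim_root3P _ three_neq0) w_root]].
  exists ((y - 1) / 2); apply/prim_root3P => //.
  have -> : ((y - 1) / 2) ^+ 2 + (y - 1) / 2 + 1 = (y ^+ 2 + 3) / 4.
    field; rewrite two_neq0 andbT.
    by rewrite (_ : 4 = 2 * 2) ?mulf_neq0 //; ring.
  by rewrite y2 addNr mul0r.
exists (2 * w + 1).
have -> : (2 * w + 1) ^+ 2 = 4 * (w ^+ 2 + w + 1) - 3 by ring.
by rewrite w_root mulr0 add0r.
Qed.

Section FinFieldSquares.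

Variable F : finFieldType.
Local Notation n := #|F|.-1.

Lemma card_pred_gt0 : (0 < n)%N.
Proof. by rewrite -ltnS prednK ?finNzRing_gt1 // (ltn_trans _ (finNzRing_gt1 F)). Qed.

Lemma expf_card_pred (x : F) : x != 0 -> x ^+ n = 1.
Proof.
move=> x_neq0; apply: (mulfI x_neq0).
by rewrite -exprS prednK ?expf_card ?mulr1 // (ltn_trans _ (finNzRing_gt1 F)).
Qed.

Lemma finField_prim_root : exists g : F, n.-primitive_root g.
Proof.
have units_root : all n.-unity_root (enum (predC1 (0 : F))).
  by apply/allP => x; rewrite mem_enum unity_rootE => /expf_card_pred ->.
have := has_prim_root card_pred_gt0 units_root (enum_uniq _).
by rewrite -cardE cardC1 => /(_ (leqnn _)) /hasP[g _ prim_g]; exists g.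
Qed.

Lemma finField_prim_rootP k :
  (0 < k)%N -> (exists w : F, k.-primitive_root w) <-> (k %| n)%N.
Proof.
move=> k_gt0; split=> [[w prim_w]|k_dvd].
  by rewrite (prim_order_dvd prim_w) expf_card_pred // (prim_root_eq0 prim_w) -lt0n.
by have [g prim_g] := finField_prim_root; exists (g ^+ (n %/ k)); apply: dvdn_prim_root.
Qed.

Hypothesis two_neq0 : (2 : F) != 0.

Let N1_neq1 : (-1 : F) != 1.
Proof. by apply: contra_neq two_neq0 => N1_eq1; rewrite -(addNr 1) N1_eq1. Qed.

Lemma dvd2_card_pred : (2 %| n)%N.
Proof.
apply/finField_prim_rootP => //; exists (-1).
by apply: prime_prim_root; rewrite ?sqrrN ?expr1n.
Qed.

Lemma expf_half_sign (x : F) :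
  x != 0 -> x ^+ (n %/ 2) = 1 \/ x ^+ (n %/ 2) = -1.
Proof.
move=> x_neq0; have : (x ^+ (n %/ 2)) ^+ 2 == 1.
  by rewrite -exprM divnK ?dvd2_card_pred ?expf_card_pred.
by rewrite sqrf_eq1 => /orP[/eqP|/eqP]; [left|right].
Qed.

Lemma expf_half_eq1P (x : F) :
  x != 0 -> x ^+ (n %/ 2) = 1 <-> exists y, y ^+ 2 = x.
Proof.
move=> x_neq0; split=> [xh1|[y y2]]; last first.
  rewrite -y2 -exprM mulnC divnK ?dvd2_card_pred ?expf_card_pred //.
  by apply: contra_neq x_neq0 => y0; rewrite -y2 y0 expr0n.
have [g prim_g] := finField_prim_root.
have [[i _] /= x_eq] := prim_rootP prim_g (expf_card_pred x_neq0).
have : (n %| i * (n %/ 2))%N by rewrite (prim_order_dvd prim_g) exprM -x_eq xh1.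
rewrite -{1}(divnK dvd2_card_pred) mulnC dvdn_pmul2r; last first.
  by rewrite divn_gt0 // dvdn_leq ?dvd2_card_pred ?card_pred_gt0.
by move=> i_even; exists (g ^+ (i %/ 2)); rewrite -exprM divnK.
Qed.

Lemma expfN1_half : (-1 : F) ^+ (n %/ 2) = 1 <-> (4 %| n)%N.
Proof.
rewrite -signr_odd (_ : 4 = 2 * 2)%N // -{2}(divnK dvd2_card_pred) dvdn_pmul2r //.
by rewrite dvdn2; case: (odd _); split=> // /eqP; rewrite expr1 (negbTE N1_neq1).
Qed.

Hypothesis three_neq0 : (3 : F) != 0.

Lemma expfN3_half : (-3 : F) ^+ (n %/ 2) = 1 <-> (3 %| n)%N.
Proof.
rewrite expf_half_eq1P ?oppr_eq0 //.
by rewrite sqr_eqN3P // finField_prim_rootP.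
Qed.

Lemma expf3_half : (3 : F) ^+ (n %/ 2) = 1 <-> ((4 %| n) <-> (3 %| n))%N.
Proof.
have N1_neq0 : (-1 : F) != 0 by rewrite oppr_eq0 oner_eq0.
have N3_neq0 : (-3 : F) != 0 by rewrite oppr_eq0.
rewrite -[3 : F]opprK -mulN1r exprMn -expfN1_half -expfN3_half.
have N1_ne1 : (-1 : F) <> 1 by apply/eqP.
have [->|->] := expf_half_sign N1_neq0; have [->|->] := expf_half_sign N3_neq0;
  by rewrite ?mulr1 ?mul1r ?mulrN1 ?opprK; tauto.
Qed.

End FinFieldSquares.

Lemma prime_gt3_ndvd23 p : prime p -> (3 < p)%N -> (~~ (2 %| p) /\ ~~ (3 %| p))%N.
Proof. by move=> p_pr p_gt3; rewrite !dvdn_prime2 //; lia. Qed.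

Lemma Fp_nat_eq p a b : prime p -> (a%:R : 'F_p) = b%:R <-> (a = b %[mod p])%N.
Proof.
move=> p_pr; split=> [ab|ab]; last by rewrite -(Fp_nat_mod p_pr) ab Fp_nat_mod.
by have := congr1 val ab; rewrite /= !val_Fp_nat.
Qed.

Lemma three_half_pow_mod p : prime p -> (3 < p)%N ->
  (3 ^ ((p - 1) %/ 2) = 1 %[mod p] <-> p %% 12 = 1 \/ p %% 12 = 11)%N.
Proof.
move=> p_pr p_gt3; have p_neq0 k : (0 < k < p)%N -> (k%:R : 'F_p) != 0.
  by move=> k_lt; apply/eqP => /(Fp_nat_eq k 0 p_pr); rewrite mod0n modn_small; lia.
have two_neq0 : (2 : 'F_p) != 0 by apply: p_neq0; lia.
have three_neq0 : (3 : 'F_p) != 0 by apply: p_neq0; lia.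
rewrite -(Fp_nat_eq _ _ p_pr) natrX mulr1n.
have := expf3_half two_neq0 three_neq0; rewrite card_Fp // -subn1 => ->.
by have := prime_gt3_ndvd23 p_pr p_gt3; lia.
Qed.

Local Close Scope ring_scope.

Lemma mult_orderP M a k :
  mult_order M a k <-> 0 < k /\ forall j, a ^ j = 1 %[mod M] <-> k %| j.
Proof.
split=> [[k_gt0 [ak1 k_min]] | [k_gt0 ord_dvd]].
  split=> // j; split=> [aj1 | /dvdnP[q ->]]; last first.
    by rewrite mulnC expnM -modnXm ak1 modnXm exp1n.
  move: aj1; rewrite {1}(divn_eq j k) expnD [_ * k]mulnC expnM.
  rewrite -modnMml -modnXm ak1 modnXm exp1n modnMml mul1n /dvdn.
  have [-> // | jk_gt0 /(k_min _ jk_gt0)] := posnP (j %% k).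
  by rewrite leqNgt ltn_mod k_gt0.
split=> //; split=> [|j j_gt0 /ord_dvd]; first exact/ord_dvd.
exact: dvdn_leq.
Qed.

Lemma mult_order_dvd M a k :
  mult_order M a k -> forall j, a ^ j = 1 %[mod M] <-> k %| j.
Proof. by case/mult_orderP. Qed.

Lemma mult_order_unique M a k :
  mult_order M a k -> forall k', mult_order M a k' <-> k = k'.
Proof.
move=> ord_k k'; split=> [ord_k' | <- //]; apply/eqP; rewrite eqn_dvd.
by apply/andP; split; [apply/(mult_order_dvd ord_k k'); case: ord_k'
                      | apply/(mult_order_dvd ord_k' k); case: ord_k] => _ [].
Qed.

Lemma mult_order_exists M a : 0 < M -> coprime a M -> exists k, mult_order M a k.
Proof.
move=> M_gt0 aM_coprime.
have : exists k, (0 < k) && (a ^ k == 1 %[mod M]).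
  by exists (totient M); rewrite totient_gt0 M_gt0 Euler_exp_totient ?eqxx.
case/ex_minnP=> k /andP[k_gt0 /eqP ak1] k_min; exists k; do 2!split=> //.
by move=> j j_gt0 aj1; apply: k_min; rewrite j_gt0 aj1 /=.
Qed.

Lemma mult_order_mul m n a k1 k2 : coprime m n ->
  mult_order m a k1 -> mult_order n a k2 -> mult_order (m * n) a (lcmn k1 k2).
Proof.
move=> mn_coprime ord1 ord2; apply/mult_orderP; split.
  by rewrite lcmn_gt0; case: ord1 => ->; case: ord2.
move=> j; rewrite dvdn_lcm; split=> [/eqP | /andP[]].
  rewrite chinese_remainder // => /andP[/eqP a1 /eqP a2].
  by apply/andP; split; [apply/(mult_order_dvd ord1) | apply/(mult_order_dvd ord2)].
move=> /(mult_order_dvd ord1) a1 /(mult_order_dvd ord2) a2.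
by apply/eqP; rewrite chinese_remainder // a1 a2 !eqxx.
Qed.

Lemma mult_order_4_3 : mult_order 4 3 2.
Proof. by do 2!split=> //; case=> [|[|j]]. Qed.

Lemma lcmn2_eq_pred p d : ~~ (2 %| p) -> ~~ (3 %| p) -> 3 < p -> 0 < d ->
  (d %| (p - 1) %/ 2 <-> p %% 12 = 1 \/ p %% 12 = 11) ->
  lcmn 2 d = p - 1 <->
  ((p = 5 %[mod 12] \/ p = 7 %[mod 12]) /\ d = p - 1) \/
  (p = 11 %[mod 12] /\ d = (p - 1) %/ 2).
Proof.
move=> ndvd2 ndvd3 p_gt3 d_gt0 d_half.
have [d_even | d_odd] := boolP (2 %| d).
  rewrite (lcmn_idPr d_even); split=> [d_eq | [[_ ->] // | [p11 d_eq]]].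
    have d_nhalf : ~~ (d %| (p - 1) %/ 2) by rewrite d_eq; apply/negP => /dvdn_leq; lia.
    by move: d_half; rewrite (negbTE d_nhalf); lia.
  by move: d_even; rewrite d_eq; lia.
have lcm_eq : lcmn 2 d = 2 * d.
  by rewrite -muln_lcm_gcd (eqP (_ : coprime 2 d)) ?muln1 ?prime_coprime.
rewrite lcm_eq; split=> [d2_eq | [[_ d_eq] | [_ ->]]]; [| lia | lia].
have d_eq : d = (p - 1) %/ 2 by lia.
by move: d_half; rewrite -d_eq dvdnn; lia.
Qed.

Theorem lemma9 (rho : nat) (hp : prime rho) (h3 : 3 < rho) :
  mult_order (4 * rho) 3 (rho - 1) <->
  ((rho = 5 %[mod 12] \/ rho = 7 %[mod 12]) /\ mult_order rho 3 (rho - 1)) \/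
  (rho = 11 %[mod 12] /\ mult_order rho 3 ((rho - 1) %/ 2)).
Proof.
have [ndvd2 ndvd3] := prime_gt3_ndvd23 hp h3.
have coprime3 : coprime 3 rho by rewrite prime_coprime.
have coprime4 : coprime 4 rho.
  by rewrite coprime_sym prime_coprime //; apply/negP => /dvdn_leq; lia.
have [d ord_d] := mult_order_exists (prime_gt0 hp) coprime3.
rewrite (mult_order_unique (mult_order_mul coprime4 mult_order_4_3 ord_d)).
rewrite !(mult_order_unique ord_d).
apply: lcmn2_eq_pred => //; first by case: ord_d.
exact: iff_trans (iff_sym (mult_order_dvd ord_d _)) (three_half_pow_mod hp h3).
Qed.
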